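(* Let $n\ge 2$ be an integer, $k,c_b>0$, $\rho_0>0$, and let $\lambda_{1,0}\le\cdots\le\lambda_{n,0}$ be real numbers. Consider the system $$\lambda_i'=-\lambda_i^2+\frac{k}{n}(\rho-c_b)\ (i=1,\dots,n),\qquad \rho'=-\rho\lambda,\quad \lambda=\sum_{i=1}^n\lambda_i,\qquad \rho(0)=\rho_0,\ \lambda_i(0)=\lambda_{i,0},$$ and suppose its maximal interval of existence is $[0,t_B)$ with $0<t_B<\infty$. Then there is an index $i$ with $\lim_{t\to t_B^-}|\lambda_i(t)|=\infty$.
   Context: Solutions are real-valued and continuously differentiable on $[0,t_B)$. *)

From Stdlib Require Import Reals List.
From Coquelicot Require Import Coquelicot.
Open Scope R_scope.

(* lambda(t) = sum_{i=0}^{n-1} lam i t  (indices 0..n-1 stand for 1..n) *)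
Definition lamsum (n : nat) (lam : nat -> R -> R) (t : R) : R :=
  fold_right Rplus 0 (map (fun i => lam i t) (seq 0 n)).

(* (lam, rho) is a solution of the system on [0, T):
   initial conditions at 0, right-continuity at 0, and the ODE holds
   (with genuine derivatives) at every t in (0, T).  Since the right-hand side
   is continuous, this is the same as a C^1 solution on [0,T) (one-sided
   derivative at 0). *)
Definition is_solution (n : nat) (k cb rho0 : R) (lam0 : nat -> R) (T : R)
    (lam : nat -> R -> R) (rho : R -> R) : Prop :=
  (forall i, (i < n)%nat -> lam i 0 = lam0 i) /\
  rho 0 = rho0 /\
  (forall i, (i < n)%nat -> filterlim (lam i) (at_right 0) (locally (lam i 0))) /\
  filterlim rho (at_right 0) (locally (rho 0)) /\
  (forall t, 0 < t < T ->
     (forall i, (i < n)%nat ->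
        is_derive (lam i) t (- (lam i t) ^ 2 + k / INR n * (rho t - cb))) /\
     is_derive rho t (- rho t * lamsum n lam t)).

From Stdlib Require Import Reals List Lra Lia Classical.
From Coquelicot Require Import Coquelicot.
Open Scope R_scope.

(* Suppose no [lam i] blows up.  Along the solution [rho t * exp (int_ta^t lambda)] is
   constant, so [rho > 0].  If some [int_ta^t lam_i] were unbounded below near [tB], then
   [u = exp (int_ta^t lam_i)] would satisfy [u'' >= - kap cb u] and come arbitrarily close
   to [0]; a Sturm comparison with [1 - kap cb (t - ta)^2] then forces
   [lam_i t <= - (9/16) / (tB - t)], a blow-up.  Hence every [int_ta^t lam_i] is bounded
   below, so [rho] is bounded above, and then [- lam_i^2] dominates the equation of [lam_i]
   whenever [|lam_i|] is large: each [lam_i] is bounded above, and also below, since a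
   [lam_i] that gets very negative keeps decreasing and blows up.  With all components
   bounded by [C] near [tB], the power-series solution (bounded by Cauchy's majorants), whose
   existence time depends on [C] only, started close enough to [tB] coincides with the
   solution (Gronwall) and continues it past [tB], contradicting maximality. *)

Definition sumn (n : nat) (f : nat -> R) : R :=
  fold_right Rplus 0 (map f (seq 0 n)).

Lemma fold_right_Rplus_app (l1 l2 : list R) :
  fold_right Rplus 0 (l1 ++ l2) = fold_right Rplus 0 l1 + fold_right Rplus 0 l2.
Proof. induction l1 as [|x l1 IH]; simpl; [|rewrite IH]; lra. Qed.

Lemma sumn_0 f : sumn 0 f = 0.
Proof. reflexivity. Qed.

Lemma sumn_S n f : sumn (S n) f = sumn n f + f n.
Proof. unfold sumn. rewrite seq_S, map_app, fold_right_Rplus_app. simpl. lra. Qed.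

Lemma sumn_ext n f g : (forall i, (i < n)%nat -> f i = g i) -> sumn n f = sumn n g.
Proof.
  induction n as [|n IH]; intros H; [reflexivity|].
  rewrite !sumn_S, IH, H; [reflexivity|lia|intros; apply H; lia].
Qed.

Lemma sumn_le n f g : (forall i, (i < n)%nat -> f i <= g i) -> sumn n f <= sumn n g.
Proof.
  induction n as [|n IH]; intros H; [apply Rle_refl|].
  rewrite !sumn_S. apply Rplus_le_compat; [apply IH; intros i Hi|]; apply H; lia.
Qed.

Lemma sumn_plus n f g : sumn n (fun i => f i + g i) = sumn n f + sumn n g.
Proof. induction n as [|n IH]; [rewrite !sumn_0; lra|]. rewrite !sumn_S, IH. lra. Qed.

Lemma sumn_scal n c f : sumn n (fun i => c * f i) = c * sumn n f.
Proof. induction n as [|n IH]; [rewrite !sumn_0; lra|]. rewrite !sumn_S, IH. lra. Qed.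

Lemma sumn_const n c : sumn n (fun _ => c) = INR n * c.
Proof. induction n as [|n IH]; [rewrite sumn_0; simpl; lra|]. rewrite sumn_S, IH, S_INR. lra. Qed.

Lemma sumn_nonneg n f : (forall i, (i < n)%nat -> 0 <= f i) -> 0 <= sumn n f.
Proof. intros H. rewrite <- (Rmult_0_r (INR n)), <- sumn_const. now apply sumn_le. Qed.

Lemma sumn_ge_term n f j :
  (forall i, (i < n)%nat -> 0 <= f i) -> (j < n)%nat -> f j <= sumn n f.
Proof.
  induction n as [|n IH]; intros H Hj; [lia|]. rewrite sumn_S.
  destruct (Nat.eq_dec j n) as [->|Hne].
  - assert (0 <= sumn n f) by (apply sumn_nonneg; intros; apply H; lia). lra.
  - assert (f j <= sumn n f) by (apply IH; [intros; apply H|]; lia).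
    assert (0 <= f n) by (apply H; lia). lra.
Qed.

Lemma Rabs_sumn_le n f : Rabs (sumn n f) <= sumn n (fun i => Rabs (f i)).
Proof.
  induction n as [|n IH]; [rewrite !sumn_0, Rabs_R0; lra|]. rewrite !sumn_S.
  eapply Rle_trans; [apply Rabs_triang|lra].
Qed.

Lemma is_derive_sumn n (f : nat -> R -> R) (df : nat -> R) x :
  (forall i, (i < n)%nat -> is_derive (f i) x (df i)) ->
  is_derive (fun t => sumn n (fun i => f i t)) x (sumn n df).
Proof.
  induction n as [|n IH]; intros H; [apply (is_derive_const 0)|].
  rewrite sumn_S. apply (is_derive_ext (fun t => sumn n (fun i => f i t) + f n t)).
  - intros; now rewrite sumn_S.
  - apply (is_derive_plus (fun t => sumn n (fun i => f i t)) (f n));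
      [apply IH; intros|]; apply H; lia.
Qed.

Lemma locally_R (x : R) (P : R -> Prop) :
  locally x P <-> exists d, 0 < d /\ forall y, Rabs (y - x) < d -> P y.
Proof.
  split.
  - intros [d Hd]. exists d. split; [apply cond_pos|]. intros y Hy. now apply Hd.
  - intros [d [Hd HP]]. exists (mkposreal d Hd). intros y Hy. now apply HP.
Qed.

Lemma continuous_R_eps (g : R -> R) x eps : continuous g x -> 0 < eps ->
  exists d, 0 < d /\ forall y, Rabs (y - x) < d -> Rabs (g y - g x) < eps.
Proof.
  intros Hc He. apply (locally_R x (fun y => Rabs (g y - g x) < eps)).
  exact (proj1 (filterlim_locally (F := locally x) g (g x)) Hc (mkposreal eps He)).
Qed.

Lemma at_left_interval (tB t' : R) (P : R -> Prop) :
  t' < tB -> (forall t, t' <= t < tB -> P t) -> at_left tB P.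
Proof.
  intros Ht' HP. apply locally_R. exists (tB - t'). split; [lra|].
  intros t Ht Htb. apply Rabs_def2 in Ht. apply HP. lra.
Qed.

Lemma at_left_gt (ta tB : R) : ta < tB -> at_left tB (fun t => ta < t < tB).
Proof. intros H. apply (at_left_interval tB ((ta + tB) / 2)); intros; lra. Qed.

Lemma at_left_interval_inv (tB ta : R) (P : R -> Prop) :
  ta < tB -> at_left tB P -> exists t', ta <= t' < tB /\ forall t, t' <= t < tB -> P t.
Proof.
  intros Hta HP. apply locally_R in HP as [d [Hd HP]].
  exists (Rmax ta (tB - d / 2)). split.
  - split; [apply Rmax_l|apply Rmax_lub_lt; lra].
  - intros t Ht. assert (tB - d / 2 <= t) by (eapply Rle_trans; [apply Rmax_r|apply Ht]).
    apply HP; [apply Rabs_def1|]; lra.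
Qed.

Lemma filter_lb_forall {T : Type} {F : (T -> Prop) -> Prop} {FF : Filter F}
    (m : nat) (g : nat -> T -> R) :
  (forall i, (i < m)%nat -> exists c, F (fun x => c <= g i x)) ->
  exists c, F (fun x => forall i, (i < m)%nat -> c <= g i x).
Proof.
  induction m as [|m IH]; intros H.
  - exists 0. apply filter_forall. intros; lia.
  - destruct IH as [c1 H1]; [intros; apply H; lia|].
    destruct (H m (Nat.lt_succ_diag_r m)) as [c2 H2].
    exists (Rmin c1 c2). generalize (filter_and _ _ H1 H2). apply filter_imp.
    intros x [Hx1 Hx2] i Hi. destruct (Nat.eq_dec i m) as [->|Hne].
    + eapply Rle_trans; [apply Rmin_r|exact Hx2].
    + eapply Rle_trans; [apply Rmin_l|apply Hx1; lia].
Qed.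

Lemma filterlim_at_left_p_infty (f : R -> R) (tB : R) :
  (forall M, at_left tB (fun t => M < f t)) ->
  filterlim f (at_left tB) (Rbar_locally p_infty).
Proof.
  intros H P [M HM]. change (at_left tB (fun t => P (f t))).
  apply (filter_imp (fun t => M < f t)); [intros t; apply HM|apply H].
Qed.

Lemma exp_le_mono x y : x <= y -> exp x <= exp y.
Proof. intros [H| ->]; [left; now apply exp_increasing|apply Rle_refl]. Qed.

Lemma is_derive_continuous (f : R -> R) x l : is_derive f x l -> continuous f x.
Proof. intros H. apply (ex_derive_continuous (V := R_NormedModule)). now exists l. Qed.

Lemma is_derive_mult_R (f g : R -> R) t df dg :
  is_derive f t df -> is_derive g t dg ->
  is_derive (fun s => f s * g s) t (df * g t + f t * dg).
Proof. intros Hf Hg. apply (is_derive_mult f g t df dg Hf Hg). intros; apply Rmult_comm. Qed.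

Lemma is_derive_exp_comp (U : R -> R) t dU :
  is_derive U t dU -> is_derive (fun s => exp (U s)) t (dU * exp (U t)).
Proof. intros H. apply (is_derive_comp exp U t (exp (U t)) dU); [apply is_derive_exp|auto]. Qed.

Lemma is_derive_shift (f : R -> R) (t0 s l : R) :
  is_derive f (s - t0) l -> is_derive (fun u => f (u - t0)) s l.
Proof.
  intros H. assert (Hc := is_derive_comp f (fun u => u - t0) s l 1 H).
  replace l with (scal 1 l) by (apply Rmult_1_l). apply Hc.
  auto_derive; [auto|ring].
Qed.

Lemma MVT_lb (f df : R -> R) a b m : a <= b ->
  (forall c, a <= c <= b -> is_derive f c (df c)) ->
  (forall c, a < c < b -> m <= df c) -> m * (b - a) <= f b - f a.
Proof.
  intros Hab Hd Hm. destruct (Req_dec a b) as [->|Hne]; [lra|].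
  destruct (MVT_cor2 f df a b) as [c [-> Hc]]; [lra|intros; apply is_derive_Reals; auto|].
  apply Rmult_le_compat_r; [lra|]. now apply Hm.
Qed.

Lemma MVT_ub (f df : R -> R) a b m : a <= b ->
  (forall c, a <= c <= b -> is_derive f c (df c)) ->
  (forall c, a < c < b -> df c <= m) -> f b - f a <= m * (b - a).
Proof.
  intros Hab Hd Hm.
  assert (H := MVT_lb (fun t => - f t) (fun t => - df t) a b (- m) Hab).
  enough (- m * (b - a) <= - f b - - f a) by lra.
  apply H; intros c Hc; [apply (is_derive_opp f)|apply Ropp_le_contravar]; auto.
Qed.

Lemma is_derive_0_const (f : R -> R) a b s t :
  (forall c, a < c < b -> is_derive f c 0) -> a < s < b -> a < t < b -> f s = f t.
Proof.
  intros Hd. revert s t.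
  enough (H : forall s t, a < s < b -> a < t < b -> s <= t -> f s = f t).
  { intros s t Hs Ht. destruct (Rle_or_lt s t); [|symmetry]; apply H; auto; lra. }
  intros s t Hs Ht Hst.
  assert (Hd' : forall c, s <= c <= t -> is_derive f c ((fun _ => 0) c)) by (intros; apply Hd; lra).
  assert (H1 := MVT_lb f _ s t 0 Hst Hd' (fun _ _ => Rle_refl 0)).
  assert (H2 := MVT_ub f _ s t 0 Hst Hd' (fun _ _ => Rle_refl 0)). lra.
Qed.

Lemma last_point_le (g : R -> R) a b Q : a <= b ->
  (forall c, a <= c <= b -> continuous g c) -> g a <= Q ->
  exists m, a <= m <= b /\ g m <= Q /\ forall s, m < s <= b -> Q < g s.
Proof.
  intros Hab Hg Ha.
  set (E := fun s => a <= s <= b /\ g s <= Q).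
  destruct (completeness E) as [m [Hub Hlub]].
  { exists b. intros s [Hs _]. lra. }
  { exists a. split; [lra|auto]. }
  assert (Ham : a <= m) by (apply Hub; split; [lra|auto]).
  assert (Hmb : m <= b) by (apply Hlub; intros s [Hs _]; lra).
  exists m. split; [lra|split].
  - apply Rnot_lt_le. intros HQ.
    destruct (continuous_R_eps g m (g m - Q) (Hg m ltac:(lra)) ltac:(lra)) as [d [Hd Hc]].
    destruct (classic (exists s, E s /\ m - d < s)) as [[s [[Hs HgQ] Hsd]] | Hno].
    + assert (s <= m) by (apply Hub; split; auto).
      assert (Habs := Hc s ltac:(rewrite Rabs_left1; lra)).
      apply Rabs_def2 in Habs. lra.
    + assert (m <= m - d); [|lra].
      apply Hlub. intros s Hs. apply Rnot_lt_le. intros Hlt. apply Hno. now exists s.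
  - intros s Hs. apply Rnot_le_lt. intros HgQ.
    assert (s <= m) by (apply Hub; split; [lra|auto]). lra.
Qed.

Lemma barrier_le (g dg : R -> R) a b Q eta : a <= b -> 0 < eta ->
  (forall c, a <= c <= b -> is_derive g c (dg c)) -> g a <= Q ->
  (forall c, a <= c <= b -> Q < g c < Q + eta -> dg c <= 0) ->
  g b <= Q.
Proof.
  intros Hab Heta Hd Ha Hdg. apply Rnot_lt_le. intros Hb.
  destruct (last_point_le g a b Q Hab) as [m [Hm [HgmQ Habove]]];
    [intros c Hc; apply (is_derive_continuous _ _ _ (Hd c Hc))|auto|].
  assert (Hmb : m < b) by (destruct (Req_dec m b); [subst; lra|lra]).
  destruct (continuous_R_eps g m eta (is_derive_continuous _ _ _ (Hd m Hm)) Heta)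
    as [d [Hd0 Hc]].
  set (s := Rmin (m + d / 2) b).
  assert (Hs : m < s <= b) by (unfold s; apply Rmin_case_strong; lra).
  assert (Hsd : s <= m + d / 2) by apply Rmin_l.
  assert (H := MVT_ub g dg m s 0 ltac:(lra) ltac:(intros; apply Hd; lra)).
  assert (g s - g m <= 0 * (s - m)); [|assert (Q < g s) by (apply Habove; lra); lra].
  apply H. intros c Hcm. apply Hdg; [lra|split; [apply Habove; lra|]].
  assert (Habs := Hc c ltac:(rewrite Rabs_right; lra)). apply Rabs_def2 in Habs. lra.
Qed.

Lemma is_derive_RInt_interval (f : R -> R) a b c t :
  (forall s, a < s < b -> continuous f s) -> a < c < b -> a < t < b ->
  is_derive (fun s => RInt f c s) t (f t).
Proof.
  intros Hf Hc Ht. apply (is_derive_RInt f _ c t); [|now apply Hf].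
  apply locally_R. exists (Rmin (t - a) (b - t)). split; [apply Rmin_pos; lra|].
  intros y Hy. apply Rabs_def2 in Hy.
  assert (Rmin (t - a) (b - t) <= t - a) by apply Rmin_l.
  assert (Rmin (t - a) (b - t) <= b - t) by apply Rmin_r.
  apply (RInt_correct (V := R_CompleteNormedModule)).
  apply (ex_RInt_continuous (V := R_CompleteNormedModule)). intros z Hz. apply Hf. split.
  - eapply Rlt_le_trans; [|apply Hz]. apply Rmin_glb_lt; lra.
  - eapply Rle_lt_trans; [apply Hz|]. apply Rmax_lub_lt; lra.
Qed.

(** * Riccati comparison *)

Section Riccati.
Variables (l dl U : R -> R) (ta tB D : R).
Hypotheses (HD : 0 <= D) (HDsmall : D * (tB - ta) ^ 2 <= / 4)
  (HU : forall t, ta <= t < tB -> is_derive U t (l t))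
  (Hl : forall t, ta <= t < tB -> is_derive l t (dl t))
  (Hdl : forall t, ta <= t < tB -> - (l t) ^ 2 - D <= dl t)
  (HUunb : forall c, ~ at_left tB (fun t => c <= U t)).

Let u t := exp (U t).
Let phi t := 1 - D * (t - ta) ^ 2.
Let W t := u t * (l t * phi t + 2 * D * (t - ta)).
Let v t := u t / phi t.

Lemma phi_bounds t : ta <= t <= tB -> 3 / 4 <= phi t <= 1.
Proof.
  intros Ht. unfold phi.
  assert ((t - ta) ^ 2 <= (tB - ta) ^ 2) by (apply pow_incr; lra).
  assert (0 <= D * (t - ta) ^ 2) by (apply Rmult_le_pos; [lra|apply pow2_ge_0]).
  assert (D * (t - ta) ^ 2 <= D * (tB - ta) ^ 2) by (apply Rmult_le_compat_l; lra).
  lra.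
Qed.

Lemma is_derive_u t : ta <= t < tB -> is_derive u t (l t * u t).
Proof. intros Ht. now apply is_derive_exp_comp, HU. Qed.

Lemma is_derive_phi t : is_derive phi t (- 2 * D * (t - ta)).
Proof. unfold phi. auto_derive; [auto|ring]. Qed.

(* Sturm comparison: [u'' >= - D u] while [phi'' + D phi <= 0], so the Wronskian
   [W = u' phi - u phi'] is nondecreasing. *)
Lemma W_nondecreasing s t : ta <= s <= t -> t < tB -> W s <= W t.
Proof.
  intros Hst Ht.
  enough (0 * (t - s) <= W t - W s) by lra.
  apply (MVT_lb W (fun c => u c * ((dl c + l c ^ 2) * phi c + 2 * D))); [lra| |].
  - intros c Hc. unfold W.
    assert (Hg : is_derive (fun x => l x * phi x + 2 * D * (x - ta)) c
                   (dl c * phi c + l c * (- 2 * D * (c - ta)) + 2 * D)).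
    { apply (is_derive_plus (fun x => l x * phi x) (fun x => 2 * D * (x - ta))).
      - apply is_derive_mult_R; [apply Hl; lra|apply is_derive_phi].
      - auto_derive; [auto|ring]. }
    replace (u c * ((dl c + l c ^ 2) * phi c + 2 * D))
      with (l c * u c * (l c * phi c + 2 * D * (c - ta))
            + u c * (dl c * phi c + l c * (- 2 * D * (c - ta)) + 2 * D)) by ring.
    exact (is_derive_mult_R u _ c _ _ (is_derive_u c ltac:(lra)) Hg).
  - intros c Hc. assert (Hp := phi_bounds c ltac:(lra)). assert (H := Hdl c ltac:(lra)).
    apply Rmult_le_pos; [left; apply exp_pos|nra].
Qed.

Lemma is_derive_v t : ta <= t < tB -> is_derive v t (W t / phi t ^ 2).
Proof.
  intros Ht. assert (Hp := phi_bounds t ltac:(lra)).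
  replace (W t / phi t ^ 2)
    with ((l t * u t * phi t - u t * (- 2 * D * (t - ta))) / phi t ^ 2)
    by (unfold W; field; lra).
  apply (is_derive_div u phi); [apply is_derive_u; lra|apply is_derive_phi|lra].
Qed.

Lemma v_pos t : ta <= t <= tB -> 0 < v t.
Proof. intros Ht. assert (Hp := phi_bounds t Ht). apply Rdiv_lt_0_compat; [apply exp_pos|lra]. Qed.

Lemma v_le_later t s : ta <= t <= s -> s < tB ->
  v t <= v s + 16 / 9 * (- Rmin (W t) 0) * (s - t).
Proof.
  intros Hts Hs.
  enough (16 / 9 * Rmin (W t) 0 * (s - t) <= v s - v t) by lra.
  apply (MVT_lb v (fun c => W c / phi c ^ 2)); [lra|intros; apply is_derive_v; lra|].
  intros c Hc. cbv beta. assert (Hp := phi_bounds c ltac:(lra)).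
  assert (HW : Rmin (W t) 0 <= W c)
    by (eapply Rle_trans; [apply Rmin_l|apply W_nondecreasing; lra]).
  assert (Hm : Rmin (W t) 0 <= 0) by apply Rmin_r.
  assert (Hp2 : 9 / 16 <= phi c ^ 2) by nra.
  apply (Rmult_le_reg_r (phi c ^ 2)); [lra|].
  replace (W c / phi c ^ 2 * phi c ^ 2) with (W c) by (field; lra). nra.
Qed.

Lemma v_small_later eps t : 0 < eps -> ta <= t < tB -> exists s, t <= s < tB /\ v s < eps.
Proof.
  intros He Ht. apply NNPP. intros Hno.
  apply (HUunb (ln (3 / 4 * eps))), (at_left_interval tB t); [lra|].
  intros s Hs. apply Rnot_lt_le. intros HUs. apply Hno. exists s. split; [exact Hs|].
  assert (Hp := phi_bounds s ltac:(lra)).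
  assert (Hus : u s < 3 / 4 * eps)
    by (unfold u; rewrite <- (exp_ln (3 / 4 * eps)) by lra; now apply exp_increasing).
  unfold v. apply (Rmult_lt_reg_r (phi s)); [lra|].
  unfold Rdiv. rewrite Rmult_assoc, Rinv_l, Rmult_1_r by lra. nra.
Qed.

Lemma v_le_dist t : ta <= t < tB -> v t <= 16 / 9 * (- Rmin (W t) 0) * (tB - t).
Proof.
  intros Ht. set (K := 16 / 9 * (- Rmin (W t) 0)).
  assert (HK : 0 <= K) by (unfold K; assert (Rmin (W t) 0 <= 0) by apply Rmin_r; lra).
  apply Rnot_lt_le. intros Hlt.
  destruct (v_small_later (v t - K * (tB - t)) t) as [s [Hs Hvs]]; [lra|lra|].
  assert (H := v_le_later t s ltac:(lra) ltac:(lra)). fold K in H.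
  assert (K * (s - t) <= K * (tB - t)) by (apply Rmult_le_compat_l; lra). lra.
Qed.

Lemma riccati_blowup_rate t : ta <= t < tB -> l t <= - (9 / 16) / (tB - t).
Proof.
  intros Ht. assert (Hv := v_le_dist t Ht). assert (Hv0 := v_pos t ltac:(lra)).
  assert (Hp := phi_bounds t ltac:(lra)). assert (Hu : 0 < u t) by apply exp_pos.
  assert (HW : W t < 0).
  { destruct (Rle_or_lt 0 (W t)) as [H|H]; [|exact H].
    rewrite Rmin_right in Hv by exact H. lra. }
  rewrite Rmin_left in Hv by lra.
  assert (Huphi : u t * phi t <= 16 / 9 * - W t * (tB - t)).
  { replace (u t * phi t) with (v t * phi t ^ 2) by (unfold v; field; lra).
    assert (0 < phi t ^ 2 <= 1) by (split; nra). nra. }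
  assert (Hl_eq : l t = W t / (u t * phi t) - 2 * D * (t - ta) / phi t)
    by (unfold W; field; lra).
  assert (0 <= 2 * D * (t - ta) / phi t)
    by (apply Rdiv_le_0_compat; [apply Rmult_le_pos|]; lra).
  assert (W t / (u t * phi t) <= W t / (16 / 9 * - W t * (tB - t))).
  { unfold Rdiv. apply Rmult_le_compat_neg_l; [lra|]. apply Rinv_le_contravar; [nra|auto]. }
  replace (W t / (16 / 9 * - W t * (tB - t))) with (- (9 / 16) / (tB - t)) in H0
    by (field; lra).
  lra.
Qed.

End Riccati.

Lemma filterlim_Rabs_of_le_neg_inv (l : R -> R) ta tB c : ta < tB -> 0 < c ->
  (forall t, ta <= t < tB -> l t <= - c / (tB - t)) ->
  filterlim (fun t => Rabs (l t)) (at_left tB) (Rbar_locally p_infty).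
Proof.
  intros Hta Hc Hl. apply filterlim_at_left_p_infty. intros M.
  set (d := Rmin (tB - ta) (c / (Rabs M + 1))).
  assert (HM := Rabs_pos M). assert (HM' := Rle_abs M).
  assert (Hd : 0 < d) by (apply Rmin_pos; [lra|apply Rdiv_lt_0_compat; lra]).
  apply (at_left_interval tB (tB - d)); [lra|]. intros t Ht.
  assert (Hd1 : d <= tB - ta) by apply Rmin_l.
  assert (Hd2 : d <= c / (Rabs M + 1)) by apply Rmin_r.
  assert (H := Hl t ltac:(lra)).
  assert (Habs : - l t <= Rabs (l t)) by (rewrite <- Rabs_Ropp; apply Rle_abs).
  assert (Hq : Rabs M + 1 <= c / (tB - t)).
  { apply (Rmult_le_reg_r (tB - t)); [lra|]. unfold Rdiv.
    rewrite Rmult_assoc, Rinv_l, Rmult_1_r by lra.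
    apply (Rmult_le_reg_r (/ (Rabs M + 1))); [apply Rinv_0_lt_compat; lra|].
    replace ((Rabs M + 1) * (tB - t) * / (Rabs M + 1)) with (tB - t) by (field; lra).
    unfold Rdiv in Hd2. lra. }
  unfold Rdiv in *. lra.
Qed.

(** * A solution without blow-up stays bounded *)

Section NearBlowup.
Variables (n : nat) (kap cb tB : R) (lam : nat -> R -> R) (rho : R -> R).
Hypotheses (Hkap : 0 <= kap) (Hcb : 0 <= cb) (HtB : 0 < tB)
  (Hrho0 : 0 < rho 0) (Hrho_right : filterlim rho (at_right 0) (locally (rho 0)))
  (Hlam' : forall i t, (i < n)%nat -> 0 < t < tB ->
     is_derive (lam i) t (- (lam i t) ^ 2 + kap * (rho t - cb)))
  (Hrho' : forall t, 0 < t < tB -> is_derive rho t (- rho t * lamsum n lam t)).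

Definition int_lam (ta : R) (i : nat) (t : R) : R := RInt (lam i) ta t.

Lemma is_derive_int_lam ta i t : (i < n)%nat -> 0 < ta < tB -> 0 < t < tB ->
  is_derive (int_lam ta i) t (lam i t).
Proof.
  intros Hi Hta Ht. apply (is_derive_RInt_interval (lam i) 0 tB); auto.
  intros s Hs. exact (is_derive_continuous _ _ _ (Hlam' i s Hi Hs)).
Qed.

Lemma rho_exp_int_lam ta t : 0 < ta < tB -> 0 < t < tB ->
  rho t * exp (sumn n (fun i => int_lam ta i t)) = rho ta.
Proof.
  intros Hta Ht.
  assert (H0 : sumn n (fun i => int_lam ta i ta) = 0).
  { rewrite <- (Rmult_0_r (INR n)), <- sumn_const. apply sumn_ext. intros.
    apply (RInt_point (V := R_CompleteNormedModule)). }
  rewrite <- (Rmult_1_r (rho ta)), <- exp_0, <- H0.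
  apply (is_derive_0_const (fun s => rho s * exp (sumn n (fun i => int_lam ta i s))) 0 tB);
    auto.
  intros c Hc. replace 0 with (- rho c * lamsum n lam c * exp (sumn n (fun i => int_lam ta i c))
                               + rho c * (lamsum n lam c * exp (sumn n (fun i => int_lam ta i c))))
    by ring.
  apply (is_derive_mult_R rho (fun s => exp (sumn n (fun i => int_lam ta i s))));
    [now apply Hrho'|].
  apply (is_derive_exp_comp (fun s => sumn n (fun i => int_lam ta i s))).
  apply (is_derive_sumn n (int_lam ta)).
  intros; now apply is_derive_int_lam.
Qed.

Lemma rho_pos t : 0 < t < tB -> 0 < rho t.
Proof.
  intros Ht.
  assert (Hpos : at_right 0 (fun s => 0 < rho s)).
  { apply Hrho_right, locally_R. exists (rho 0). split; [exact Hrho0|].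
    intros y Hy. apply Rabs_def2 in Hy. lra. }
  assert (Hnear : at_right 0 (fun s => 0 < s < tB)).
  { apply locally_R. exists tB. split; [exact HtB|].
    intros y Hy Hy0. apply Rabs_def2 in Hy. lra. }
  destruct (filter_ex _ (filter_and _ _ Hnear Hpos)) as [s [Hs Hrs]].
  rewrite <- (rho_exp_int_lam s t Hs Ht) in Hrs.
  assert (Hexp := exp_pos (sumn n (fun i => int_lam s i t))). nra.
Qed.

Hypothesis Hnb : forall i, (i < n)%nat ->
  ~ filterlim (fun t => Rabs (lam i t)) (at_left tB) (Rbar_locally p_infty).

(* Close enough to [tB] for the Riccati comparison with [D = kap * cb]. *)
Let ta := tB - Rmin (tB / 2) (/ (2 * (kap * cb + 1))).

Lemma ta_spec : 0 < ta < tB /\ kap * cb * (tB - ta) ^ 2 <= / 4.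
Proof.
  set (d := Rmin (tB / 2) (/ (2 * (kap * cb + 1)))).
  assert (HD : 0 <= kap * cb) by (apply Rmult_le_pos; lra).
  assert (Hd0 : 0 < d) by (apply Rmin_pos; [lra|apply Rinv_0_lt_compat; lra]).
  assert (Hd1 : d <= tB / 2) by apply Rmin_l.
  assert (Hd2 : (kap * cb + 1) * d <= / 2).
  { replace (/ 2) with ((kap * cb + 1) * / (2 * (kap * cb + 1))) by (field; lra).
    apply Rmult_le_compat_l; [lra|apply Rmin_r]. }
  unfold ta; fold d. split; [lra|]. replace (tB - (tB - d)) with d by ring. nra.
Qed.

Lemma int_lam_bounded_below i : (i < n)%nat ->
  exists c, at_left tB (fun t => c <= int_lam ta i t).
Proof.
  intros Hi. destruct ta_spec as [Hta HDsmall]. apply NNPP. intros Hno.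
  apply (Hnb i Hi), (filterlim_Rabs_of_le_neg_inv (lam i) ta tB (9 / 16)); [lra|lra|].
  apply (riccati_blowup_rate (lam i) (fun t => - (lam i t) ^ 2 + kap * (rho t - cb))
           (int_lam ta i) ta tB (kap * cb)); [apply Rmult_le_pos; lra|exact HDsmall| | | |].
  - intros t Ht. apply is_derive_int_lam; auto; lra.
  - intros t Ht. apply Hlam'; auto; lra.
  - intros t Ht. assert (0 <= kap * rho t) by (apply Rmult_le_pos; [|left; apply rho_pos]; lra).
    lra.
  - intros c Hc. apply Hno. now exists c.
Qed.

Lemma rho_bounded_above : exists R, at_left tB (fun t => 0 < rho t <= R).
Proof.
  destruct ta_spec as [Hta _].
  destruct (filter_lb_forall n (int_lam ta) int_lam_bounded_below) as [c Hc].
  exists (rho ta * exp (- (INR n * c))).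
  generalize (filter_and _ _ Hc (at_left_gt ta tB ltac:(lra))). apply filter_imp.
  intros t [Hct Ht]. split; [apply rho_pos; lra|].
  rewrite <- (rho_exp_int_lam ta t) by lra.
  rewrite Rmult_assoc, <- exp_plus. rewrite <- (Rmult_1_r (rho t)) at 1.
  apply Rmult_le_compat_l; [left; apply rho_pos; lra|].
  rewrite <- exp_0. apply exp_le_mono.
  assert (INR n * c <= sumn n (fun i => int_lam ta i t)); [|lra].
  rewrite <- sumn_const. apply sumn_le. intros i Hi. now apply Hct.
Qed.

Lemma lam_dissipative : exists Q t1, 0 < t1 < tB /\ forall i t, (i < n)%nat ->
  t1 <= t < tB -> Q <= Rabs (lam i t) -> - (lam i t) ^ 2 + kap * (rho t - cb) < 0.
Proof.
  destruct rho_bounded_above as [R HR].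
  destruct (at_left_interval_inv tB (tB / 2) _ ltac:(lra) HR) as [t1 [Ht1 Hrho]].
  exists (kap * R + 1), t1. split; [lra|]. intros i t Hi Ht HQ.
  destruct (Hrho t Ht) as [Hr0 HrR].
  assert (0 <= kap * R) by (apply Rmult_le_pos; lra).
  assert (kap * (rho t - cb) <= kap * R) by (apply Rmult_le_compat_l; lra).
  rewrite <- pow2_abs. nra.
Qed.

Lemma lam_bounded_above i : (i < n)%nat -> exists c, at_left tB (fun t => lam i t <= c).
Proof.
  intros Hi. destruct lam_dissipative as [Q [t1 [Ht1 Hdiss]]].
  exists (Rmax (lam i t1) (Rabs Q)). apply (at_left_interval tB t1); [lra|]. intros t Ht.
  apply (barrier_le (lam i) (fun s => - (lam i s) ^ 2 + kap * (rho s - cb)) t1 t _ 1);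
    [lra|lra| |apply Rmax_l|].
  - intros c Hc. apply Hlam'; auto; lra.
  - intros c Hc Hgc. left. apply (Hdiss i c Hi); [lra|].
    assert (Rabs Q <= Rmax (lam i t1) (Rabs Q)) by apply Rmax_r.
    assert (Q <= Rabs Q) by apply Rle_abs. assert (0 <= Rabs Q) by apply Rabs_pos.
    rewrite Rabs_right; lra.
Qed.

(* Once [lam i] is below [- Q], it keeps decreasing; so an unbounded-below [lam i] blows up. *)
Lemma lam_bounded_below i : (i < n)%nat -> exists c, at_left tB (fun t => c <= lam i t).
Proof.
  intros Hi. destruct lam_dissipative as [Q [t1 [Ht1 Hdiss]]].
  apply NNPP. intros Hno. apply (Hnb i Hi), filterlim_at_left_p_infty. intros M.
  assert (HM := Rabs_pos M). assert (HM' := Rle_abs M).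
  assert (HQ := Rle_abs Q). assert (HQ' := Rabs_pos Q).
  assert (Hs : exists s, t1 <= s < tB /\ lam i s < - (Rabs M + Rabs Q + 1)).
  { apply NNPP. intros Hs. apply Hno. exists (- (Rabs M + Rabs Q + 1)). apply (at_left_interval tB t1); [lra|].
    intros t Ht. apply Rnot_lt_le. intros Hlt. apply Hs. now exists t. }
  destruct Hs as [s [Hs Hls]].
  apply (at_left_interval tB s); [lra|]. intros t Ht.
  assert (lam i t <= lam i s).
  { apply (barrier_le (lam i) (fun s => - (lam i s) ^ 2 + kap * (rho s - cb)) s t _ 1);
      [lra|lra| |lra|].
    - intros c Hc. apply Hlam'; auto; lra.
    - intros c Hc Hgc. left. apply (Hdiss i c Hi); [lra|]. rewrite Rabs_left; lra. }
  assert (- lam i t <= Rabs (lam i t)) by (rewrite <- Rabs_Ropp; apply Rle_abs). lra.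
Qed.

Lemma solution_bounded_near_tB : exists B, at_left tB (fun t =>
  (forall i, (i < n)%nat -> Rabs (lam i t) <= B) /\ Rabs (rho t) <= B).
Proof.
  destruct (filter_lb_forall (F := at_left tB) n (fun i t => - Rabs (lam i t))) as [c Hc].
  { intros i Hi. destruct (lam_bounded_above i Hi) as [c1 H1].
    destruct (lam_bounded_below i Hi) as [c2 H2].
    exists (- (Rabs c1 + Rabs c2)). generalize (filter_and _ _ H1 H2). apply filter_imp.
    intros t [Ht1 Ht2]. enough (Rabs (lam i t) <= Rabs c1 + Rabs c2) by lra.
    assert (Hc2 := Rle_abs (- c2)). rewrite Rabs_Ropp in Hc2.
    assert (Hc1 := Rle_abs c1). assert (Hc1' := Rabs_pos c1). assert (Hc2' := Rabs_pos c2).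
    apply Rabs_le. split; lra. }
  destruct rho_bounded_above as [R HR].
  exists (Rmax (- c) R). generalize (filter_and _ _ Hc HR). apply filter_imp.
  intros t [Hlam [Hr0 HrR]]. split.
  - intros i Hi. assert (H := Hlam i Hi). eapply Rle_trans; [|apply Rmax_l]. lra.
  - rewrite Rabs_right by lra. eapply Rle_trans; [exact HrR|apply Rmax_r].
Qed.

End NearBlowup.

(** * Uniqueness *)

(* The state [(z 0, ..., z (n-1), z n)] stands for [(lam_1, ..., lam_n, rho)]. *)
Definition vfield (n : nat) (kap cb : R) (z : nat -> R) (i : nat) : R :=
  if (i <? n)%nat then - (z i) ^ 2 + kap * (z n - cb) else - z n * sumn n z.

Definition solves_at (n : nat) (kap cb : R) (z : nat -> R -> R) (t : R) : Prop :=
  forall i, (i <= n)%nat -> is_derive (z i) t (vfield n kap cb (fun j => z j t) i).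

Lemma vfield_lt n kap cb z i : (i < n)%nat -> vfield n kap cb z i = - (z i) ^ 2 + kap * (z n - cb).
Proof. intros Hi. unfold vfield. now rewrite (proj2 (Nat.ltb_lt i n) Hi). Qed.

Lemma vfield_n n kap cb z : vfield n kap cb z n = - z n * sumn n z.
Proof. unfold vfield. now rewrite Nat.ltb_irrefl. Qed.

Section Energy.
Variables (n : nat) (kap cb K : R) (x y : nat -> R).
Hypotheses (Hkap : 0 <= kap) (Hx : forall j, (j <= n)%nat -> Rabs (x j) <= K)
  (Hy : forall j, (j <= n)%nat -> Rabs (y j) <= K).

Let e j := x j - y j.

Lemma vfield_energy_lt i : (i < n)%nat ->
  2 * e i * (vfield n kap cb x i - vfield n kap cb y i) <= (4 * K + kap) * e i ^ 2 + kap * e n ^ 2.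
Proof.
  intros Hi. rewrite !vfield_lt by exact Hi. unfold e.
  assert (Hxi := Hx i ltac:(lia)). assert (Hyi := Hy i ltac:(lia)).
  apply Rabs_le_between in Hxi, Hyi.
  assert (0 <= (2 * K + (x i + y i)) * (x i - y i) ^ 2) by (apply Rmult_le_pos; [lra|apply pow2_ge_0]).
  assert (0 <= kap * ((x i - y i) - (x n - y n)) ^ 2) by (apply Rmult_le_pos; [lra|apply pow2_ge_0]).
  nra.
Qed.

Lemma vfield_energy_n :
  2 * e n * (vfield n kap cb x n - vfield n kap cb y n)
  <= 3 * INR n * K * e n ^ 2 + K * sumn n (fun l => e l ^ 2).
Proof.
  rewrite !vfield_n.
  assert (HK : 0 <= K) by (eapply Rle_trans; [apply Rabs_pos|apply (Hx n); lia]).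
  assert (Hsx : Rabs (sumn n x) <= INR n * K).
  { eapply Rle_trans; [apply Rabs_sumn_le|]. rewrite <- sumn_const.
    apply sumn_le. intros l Hl. apply Hx; lia. }
  assert (Hsd : sumn n x - sumn n y = sumn n e).
  { unfold e. rewrite (sumn_ext n (fun l => x l - y l) (fun l => x l + -1 * y l)) by (intros; ring).
    rewrite sumn_plus, sumn_scal. ring. }
  replace (2 * e n * (- x n * sumn n x - - y n * sumn n y))
    with (- 2 * e n ^ 2 * sumn n x + sumn n (fun l => - 2 * y n * e n * e l))
    by (rewrite sumn_scal, <- Hsd; unfold e; ring).
  assert (T1 : - 2 * e n ^ 2 * sumn n x <= 2 * INR n * K * e n ^ 2).
  { apply Rabs_le_between in Hsx. assert (0 <= e n ^ 2) by apply pow2_ge_0. nra. }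
  assert (T2 : sumn n (fun l => - 2 * y n * e n * e l) <= sumn n (fun l => K * e n ^ 2 + K * e l ^ 2)).
  { apply sumn_le. intros l Hl. assert (Hyn := Hy n ltac:(lia)). apply Rabs_le_between in Hyn.
    assert (0 <= (K + y n) * (e n + e l) ^ 2) by (apply Rmult_le_pos; [lra|apply pow2_ge_0]).
    assert (0 <= (K - y n) * (e n - e l) ^ 2) by (apply Rmult_le_pos; [lra|apply pow2_ge_0]).
    nra. }
  rewrite sumn_plus, sumn_const, (sumn_scal n K) in T2. lra.
Qed.

Lemma vfield_energy :
  sumn (S n) (fun i => 2 * e i * (vfield n kap cb x i - vfield n kap cb y i))
  <= (5 * K + kap + INR n * kap + 3 * INR n * K) * sumn (S n) (fun i => e i ^ 2).
Proof.
  assert (HK : 0 <= K) by (eapply Rle_trans; [apply Rabs_pos|apply (Hx n); lia]).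
  assert (Hn := pos_INR n).
  assert (HE := sumn_nonneg n (fun l => e l ^ 2) (fun l _ => pow2_ge_0 (e l))).
  assert (Hen := pow2_ge_0 (e n)).
  assert (Hlt : sumn n (fun i => 2 * e i * (vfield n kap cb x i - vfield n kap cb y i))
                <= (4 * K + kap) * sumn n (fun i => e i ^ 2) + INR n * (kap * e n ^ 2)).
  { rewrite <- sumn_scal, <- sumn_const, <- sumn_plus. apply sumn_le. intros i Hi.
    now apply vfield_energy_lt. }
  rewrite !sumn_S. assert (Hlast := vfield_energy_n).
  assert (0 <= INR n * kap) by (apply Rmult_le_pos; lra).
  assert (0 <= INR n * K) by (apply Rmult_le_pos; lra).
  nra.
Qed.

End Energy.

Lemma gronwall_zero (d dd : R -> R) a b L : a <= b ->
  (forall t, a <= t <= b -> is_derive d t (dd t)) ->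
  (forall t, a <= t <= b -> dd t <= L * d t) -> d a = 0 -> d b <= 0.
Proof.
  intros Hab Hd Hdd Ha.
  assert (H : d b * exp (- L * b) - d a * exp (- L * a) <= 0 * (b - a)).
  { apply (MVT_ub (fun t => d t * exp (- L * t)) (fun t => (dd t - L * d t) * exp (- L * t)));
      [exact Hab| |].
    - intros t Ht. replace ((dd t - L * d t) * exp (- L * t))
        with (dd t * exp (- L * t) + d t * (- L * exp (- L * t))) by ring.
      apply (is_derive_mult_R d (fun s => exp (- L * s))); [now apply Hd|].
      auto_derive; [auto|ring].
    - intros t Ht. assert (dd t <= L * d t) by (apply Hdd; lra).
      assert (0 < exp (- L * t)) by apply exp_pos. nra. }
  rewrite Ha in H. assert (0 < exp (- L * b)) by apply exp_pos. nra.
Qed.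

Lemma solves_unique n kap cb (x y : nat -> R -> R) a b K : 0 <= kap -> a <= b ->
  (forall t, a <= t <= b -> solves_at n kap cb x t /\ solves_at n kap cb y t) ->
  (forall t, a <= t <= b -> forall i, (i <= n)%nat -> Rabs (x i t) <= K /\ Rabs (y i t) <= K) ->
  (forall i, (i <= n)%nat -> x i a = y i a) ->
  forall i, (i <= n)%nat -> x i b = y i b.
Proof.
  intros Hkap Hab Hsol Hbnd Ha.
  set (d := fun t => sumn (S n) (fun i => (x i t - y i t) ^ 2)).
  assert (Hdb : d b <= 0).
  { apply (gronwall_zero d
      (fun t => sumn (S n) (fun i => 2 * (x i t - y i t)
         * (vfield n kap cb (fun j => x j t) i - vfield n kap cb (fun j => y j t) i)))
      a b (5 * K + kap + INR n * kap + 3 * INR n * K) Hab).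
    - intros t Ht. destruct (Hsol t Ht) as [Hx Hy].
      apply is_derive_sumn. intros i Hi.
      replace (2 * (x i t - y i t) * (vfield n kap cb (fun j => x j t) i - vfield n kap cb (fun j => y j t) i))
        with (INR 2 * (vfield n kap cb (fun j => x j t) i - vfield n kap cb (fun j => y j t) i)
              * (x i t - y i t) ^ Init.Nat.pred 2) by (simpl; ring).
      apply (is_derive_pow (fun s => x i s - y i s) 2 t).
      apply (is_derive_minus (x i) (y i)); [apply Hx|apply Hy]; lia.
    - intros t Ht. apply (vfield_energy n kap cb K (fun j => x j t) (fun j => y j t) Hkap);
        intros j Hj; apply (Hbnd t Ht j Hj).
    - unfold d. rewrite <- (Rmult_0_r (INR (S n))), <- sumn_const. apply sumn_ext.
      intros i Hi. rewrite Ha by lia. ring. }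
  intros i Hi.
  assert ((x i b - y i b) ^ 2 <= d b)
    by (apply (sumn_ge_term (S n) (fun i => (x i b - y i b) ^ 2)); [intros; apply pow2_ge_0|lia]).
  assert (H0 := pow2_ge_0 (x i b - y i b)). nra.
Qed.

(** * Local existence by power series *)

Lemma CV_radius_ge_of_bound (a : nat -> R) A M : 0 < M ->
  (forall m, Rabs (a m) <= A * M ^ m) -> Rbar_le (/ M) (CV_radius a).
Proof.
  intros HM Ha. apply (proj1 (CV_radius_bounded a)). exists A. intros m.
  rewrite Rabs_mult, <- RPow_abs, (Rabs_right (/ M)), pow_inv
    by (left; apply Rinv_0_lt_compat; exact HM).
  apply (Rmult_le_reg_r (M ^ m)); [now apply pow_lt|].
  rewrite Rmult_assoc, Rinv_l, Rmult_1_r by (apply pow_nonzero; lra). apply Ha.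
Qed.

Lemma Rabs_PSeries_le (a : nat -> R) A M s : 0 < M -> 0 <= A ->
  (forall m, Rabs (a m) <= A * M ^ m) -> Rabs s <= / (2 * M) ->
  Rabs (PSeries a s) <= 2 * A.
Proof.
  intros HM HA Ha Hs. set (q := M * Rabs s).
  assert (Hq : 0 <= q <= / 2).
  { split; [apply Rmult_le_pos; [lra|apply Rabs_pos]|]. unfold q.
    replace (/ 2) with (M * / (2 * M)) by (field; lra). apply Rmult_le_compat_l; lra. }
  assert (Hgeo : is_series (fun m => A * q ^ m) (A * / (1 - q))).
  { apply (is_series_scal_l A (fun m => q ^ m)), is_series_geom. rewrite Rabs_right; lra. }
  assert (Hin : Rbar_lt (Rabs s) (CV_radius a)).
  { eapply Rbar_lt_le_trans; [|exact (CV_radius_ge_of_bound a A M HM Ha)]. simpl.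
    eapply Rle_lt_trans; [exact Hs|]. apply Rinv_lt_contravar; nra. }
  eapply Rle_trans; [apply Series_Rabs, CV_disk_inside, Hin|].
  eapply Rle_trans.
  - apply (Series_le _ (fun m => A * q ^ m)); [|eexists; exact Hgeo].
    intros m. split; [apply Rabs_pos|]. unfold q.
    rewrite Rabs_mult, <- RPow_abs, Rpow_mult_distr, <- Rmult_assoc.
    apply Rmult_le_compat_r; [apply pow_le, Rabs_pos|apply Ha].
  - rewrite (is_series_unique _ _ Hgeo).
    assert (/ (1 - q) <= 2) by (replace 2 with (/ / 2) by field; apply Rinv_le_contravar; lra).
    nra.
Qed.

Definition delta0 (m : nat) : R := match m with O => 1 | S _ => 0 end.

Lemma is_pseries_delta0 s : is_pseries delta0 s 1.
Proof.
  apply is_pseries_R. replace 1 with (/ (1 - 0 * s)) by (field; lra).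
  apply (is_series_ext (fun m => (0 * s) ^ m)); [|apply is_series_geom; rewrite Rmult_0_l, Rabs_R0; lra].
  intros [|m]; simpl; ring.
Qed.

Lemma is_pseries_sumn (a : nat -> nat -> R) (v : nat -> R) m s :
  (forall l, (l < m)%nat -> is_pseries (a l) s (v l)) ->
  is_pseries (fun p => sumn m (fun l => a l p)) s (sumn m v).
Proof.
  induction m as [|m IH]; intros H.
  - assert (H0 := is_pseries_scal 0 delta0 s 1 (Rmult_comm _ _) (is_pseries_delta0 s)).
    change (scal 0 1) with (0 * 1) in H0. rewrite Rmult_0_l in H0.
    apply (is_pseries_ext _ _ _ _ (fun p => Rmult_0_l (delta0 p)) H0).
  - rewrite sumn_S. apply (is_pseries_ext (PS_plus (fun p => sumn m (fun l => a l p)) (a m))).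
    + intros p. now rewrite sumn_S.
    + apply (is_pseries_plus _ _ s (sumn m v) (v m)); [apply IH; intros|]; apply H; lia.
Qed.

Lemma Rabs_PS_mult_le (a b : nat -> R) A B M m : 0 <= A -> 0 <= B -> 0 < M ->
  (forall k, (k <= m)%nat -> Rabs (a k) <= A * M ^ k) ->
  (forall k, (k <= m)%nat -> Rabs (b k) <= B * M ^ k) ->
  Rabs (PS_mult a b m) <= INR (S m) * (A * B * M ^ m).
Proof.
  intros HA HB HM Ha Hb. unfold PS_mult.
  eapply Rle_trans; [apply sum_f_R0_triangle|].
  rewrite <- (Rmult_comm (A * B * M ^ m)), <- sum_cte. apply sum_Rle. intros k Hk.
  assert (E : M ^ m = M ^ k * M ^ (m - k)) by (rewrite <- pow_add; f_equal; lia).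
  replace (A * B * M ^ m) with ((A * M ^ k) * (B * M ^ (m - k))) by (rewrite E; ring).
  rewrite Rabs_mult. apply Rmult_le_compat; try apply Rabs_pos; [apply Ha|apply Hb]; lia.
Qed.

Section PowerSeriesSolution.
Variables (n : nat) (kap cb : R).

Definition vfield_ps (a : nat -> nat -> R) (i m : nat) : R :=
  if (i <? n)%nat then - PS_mult (a i) (a i) m + kap * a n m - kap * cb * delta0 m
  else - PS_mult (a n) (fun p => sumn n (fun l => a l p)) m.

Lemma vfield_ps_ext (a b : nat -> nat -> R) i m :
  (forall l p, (p <= m)%nat -> a l p = b l p) -> vfield_ps a i m = vfield_ps b i m.
Proof.
  intros H. unfold vfield_ps, PS_mult.
  rewrite (sum_eq (fun k => a i k * a i (m - k)%nat) (fun k => b i k * b i (m - k)%nat)),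
    (sum_eq (fun k => a n k * sumn n (fun l => a l (m - k)%nat))
            (fun k => b n k * sumn n (fun l => b l (m - k)%nat))), H; auto.
  - intros k Hk. rewrite H by lia. f_equal. apply sumn_ext. intros; apply H; lia.
  - intros k Hk. rewrite !H by lia. reflexivity.
Qed.

Lemma is_pseries_vfield_ps (a : nat -> nat -> R) s :
  (forall l, (l <= n)%nat -> Rbar_lt (Rabs s) (CV_radius (a l))) ->
  Rbar_lt (Rabs s) (CV_radius (fun p => sumn n (fun l => a l p))) ->
  forall i, (i <= n)%nat ->
  is_pseries (vfield_ps a i) s (vfield n kap cb (fun j => PSeries (a j) s) i).
Proof.
  intros Ha Hsum i Hi.
  assert (Hser : forall l, (l <= n)%nat -> is_pseries (a l) s (PSeries (a l) s))
    by (intros; now apply PSeries_correct, CV_radius_inside, Ha).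
  assert (Hcomm : forall c, mult s c = mult c s) by (intros; apply Rmult_comm).
  unfold vfield, vfield_ps. destruct (i <? n)%nat.
  - set (yi := PSeries (a i) s). set (yn := PSeries (a n) s).
    assert (H := is_pseries_plus _ _ s _ _
      (is_pseries_plus _ _ s _ _
        (is_pseries_scal (-1) _ s _ (Hcomm _)
          (is_pseries_mult (a i) (a i) s _ _ (Hser i Hi) (Hser i Hi) (Ha i Hi) (Ha i Hi)))
        (is_pseries_scal kap _ s _ (Hcomm _) (Hser n (le_n n))))
      (is_pseries_scal (- (kap * cb)) _ s _ (Hcomm _) (is_pseries_delta0 s))).
    replace (- yi ^ 2 + kap * (yn - cb)) with (plus (plus (scal (-1) (yi * yi)) (scal kap yn)) (scal (- (kap * cb)) 1))
      by (unfold plus, scal; simpl; unfold mult; simpl; ring).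
    refine (is_pseries_ext _ _ _ _ _ H). intros m.
    unfold PS_plus, PS_scal, plus, scal; simpl; unfold mult; simpl. ring.
  - set (yn := PSeries (a n) s).
    assert (Hs : is_pseries (fun p => sumn n (fun l => a l p)) s (sumn n (fun j => PSeries (a j) s)))
      by (apply is_pseries_sumn; intros; apply Hser; lia).
    assert (H := is_pseries_scal (-1) _ s _ (Hcomm _)
      (is_pseries_mult _ _ s _ _ (Hser n (le_n n)) Hs (Ha n (le_n n)) Hsum)).
    replace (- yn * sumn n (fun j => PSeries (a j) s)) with (scal (-1) (yn * sumn n (fun j => PSeries (a j) s)))
      by (unfold scal; simpl; unfold mult; simpl; ring).
    refine (is_pseries_ext _ _ _ _ _ H). intros m.
    unfold PS_scal, scal; simpl; unfold mult; simpl. ring.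
Qed.

(* Dominates [C + kap + kap * cb] and [INR n * C], the constants of the two branches of
   [vfield_ps]. *)
Definition growth (C : R) : R := C * (INR n + 1) + kap + kap * cb + 1.

Hypotheses (Hkap : 0 <= kap) (Hcb : 0 <= cb).

Lemma Rabs_vfield_ps_le (a : nat -> nat -> R) C m i : 1 <= C -> (i <= n)%nat ->
  (forall l p, (l <= n)%nat -> (p <= m)%nat -> Rabs (a l p) <= C * growth C ^ p) ->
  Rabs (vfield_ps a i m) <= INR (S m) * (C * growth C ^ S m).
Proof.
  intros HC Hi Ha. set (M := growth C) in *.
  assert (Hn := pos_INR n). assert (HD : 0 <= kap * cb) by (apply Rmult_le_pos; lra).
  assert (HM : C + kap + kap * cb <= M /\ INR n * C <= M) by (unfold M, growth; split; nra).
  assert (HMm : 1 <= M ^ m) by (apply pow_R1_Rle; lra).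
  assert (HZ : 1 <= C * M ^ m) by nra.
  assert (HSm : 1 <= INR (S m)) by (rewrite S_INR; assert (H := pos_INR m); lra).
  simpl (M ^ S m). unfold vfield_ps. destruct (i <? n)%nat.
  - assert (HP := Rabs_PS_mult_le (a i) (a i) C C M m ltac:(lra) ltac:(lra) ltac:(lra)
                    (fun k Hk => Ha i k Hi Hk) (fun k Hk => Ha i k Hi Hk)).
    assert (Han := Ha n m (le_n n) (le_n m)).
    assert (Hd : 0 <= delta0 m <= 1) by (destruct m; simpl; lra).
    set (Z := C * M ^ m) in *.
    apply Rabs_le_between in HP, Han.
    assert (H1 : - (kap * Z) <= kap * a n m <= kap * Z) by (split; nra).
    assert (H2 : 0 <= kap * cb * delta0 m <= kap * cb * Z) by (split; nra).
    assert (H3 : INR (S m) * (C * C * M ^ m) + kap * Z + kap * cb * Z <= INR (S m) * (C * (M * M ^ m))).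
    { replace (INR (S m) * (C * C * M ^ m)) with (INR (S m) * Z * C) by (unfold Z; ring).
      replace (INR (S m) * (C * (M * M ^ m))) with (INR (S m) * Z * M) by (unfold Z; ring).
      assert (HsZ : 1 <= INR (S m) * Z) by nra.
      assert (INR (S m) * Z * (C + kap + kap * cb) <= INR (S m) * Z * M)
        by (apply Rmult_le_compat_l; lra).
      assert (0 <= (INR (S m) * Z - 1) * (kap + kap * cb)) by (apply Rmult_le_pos; lra).
      nra. }
    apply Rabs_le. split; lra.
  - assert (Hsum : forall k, (k <= m)%nat ->
              Rabs (sumn n (fun l => a l k)) <= INR n * C * M ^ k).
    { intros k Hk. eapply Rle_trans; [apply Rabs_sumn_le|].
      rewrite Rmult_assoc, <- sumn_const. apply sumn_le. intros l Hl. apply Ha; lia. }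
    assert (HP := Rabs_PS_mult_le (a n) _ C (INR n * C) M m ltac:(lra) ltac:(nra) ltac:(lra)
                    (fun k Hk => Ha n k (le_n n) Hk) Hsum).
    rewrite Rabs_Ropp. eapply Rle_trans; [exact HP|].
    apply Rmult_le_compat_l; [lra|].
    assert (0 <= M ^ m) by lra. nra.
Qed.

Variable x0 : nat -> R.

(* [coef_upto m] holds the Taylor coefficients of orders [<= m]; this realises the strong
   recursion [coef i (S m) = vfield_ps coef i m / INR (S m)]. *)
Fixpoint coef_upto (m : nat) : nat -> nat -> R :=
  match m with
  | O => fun i _ => x0 i
  | S m' => fun i p =>
      if (p <=? m')%nat then coef_upto m' i p else vfield_ps (coef_upto m') i m' / INR (S m')
  end.

Definition coef (i m : nat) : R := coef_upto m i m.

Lemma coef_upto_le m p i : (p <= m)%nat -> coef_upto m i p = coef i p.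
Proof.
  intros H. induction H as [|m Hpm IH]; [reflexivity|].
  simpl. now rewrite (proj2 (Nat.leb_le p m) Hpm).
Qed.

Lemma coef_S i m : coef i (S m) = vfield_ps coef i m / INR (S m).
Proof.
  unfold coef at 1. cbn [coef_upto]. rewrite (proj2 (Nat.leb_gt (S m) m) (Nat.lt_succ_diag_r m)).
  f_equal. apply vfield_ps_ext. intros l p Hp. now apply coef_upto_le.
Qed.

Lemma Rabs_coef_le C : 1 <= C -> (forall i, (i <= n)%nat -> Rabs (x0 i) <= C) ->
  forall i m, (i <= n)%nat -> Rabs (coef i m) <= C * growth C ^ m.
Proof.
  intros HC Hx0.
  enough (H : forall m p i, (p <= m)%nat -> (i <= n)%nat -> Rabs (coef i p) <= C * growth C ^ p)
    by (intros i m Hi; now apply (H m)).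
  induction m as [|m IH]; intros p i Hp Hi.
  - replace p with 0%nat by lia. rewrite pow_O, Rmult_1_r. now apply Hx0.
  - destruct (Nat.eq_dec p (S m)) as [->|Hne]; [|apply IH; lia].
    assert (Hv := Rabs_vfield_ps_le coef C m i HC Hi (fun l p Hl Hp => IH p l Hp Hl)).
    assert (HS : 0 < INR (S m)) by (apply lt_0_INR; lia).
    assert (E : Rabs (coef i (S m)) * INR (S m) = Rabs (vfield_ps coef i m)).
    { rewrite coef_S. unfold Rdiv. rewrite Rabs_mult, Rabs_inv, (Rabs_right (INR (S m))) by lra.
      field. lra. }
    apply (Rmult_le_reg_r (INR (S m))); [exact HS|]. rewrite E. lra.
Qed.

End PowerSeriesSolution.

(* The existence time [h] depends only on the bound [C] of the data, not on the data. *)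
Lemma local_solution n kap cb C : 0 <= kap -> 0 <= cb -> 1 <= C ->
  exists h, 0 < h /\ forall x0 : nat -> R, (forall i, (i <= n)%nat -> Rabs (x0 i) <= C) ->
  exists y : nat -> R -> R, (forall i, (i <= n)%nat -> y i 0 = x0 i) /\
    forall s, Rabs s <= h ->
      solves_at n kap cb y s /\ forall i, (i <= n)%nat -> Rabs (y i s) <= 2 * C.
Proof.
  intros Hkap Hcb HC. set (M := growth n kap cb C).
  assert (HM : 0 < M) by (unfold M, growth; assert (H := pos_INR n);
                          assert (0 <= kap * cb) by (apply Rmult_le_pos; lra); nra).
  exists (/ (2 * M)). split; [apply Rinv_0_lt_compat; lra|]. intros x0 Hx0.
  set (a := coef n kap cb x0).
  assert (Ha : forall l p, (l <= n)%nat -> Rabs (a l p) <= C * M ^ p)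
    by (intros; now apply Rabs_coef_le).
  exists (fun i => PSeries (a i)). split; [intros; apply PSeries_0|].
  intros s Hs.
  assert (Hs' : Rbar_lt (Rabs s) (/ M))
    by (eapply Rle_lt_trans; [exact Hs|apply Rinv_lt_contravar; nra]).
  assert (Hr : forall l, (l <= n)%nat -> Rbar_lt (Rabs s) (CV_radius (a l)))
    by (intros; eapply Rbar_lt_le_trans; [exact Hs'|apply (CV_radius_ge_of_bound _ C); auto]).
  assert (Hrs : Rbar_lt (Rabs s) (CV_radius (fun p => sumn n (fun l => a l p)))).
  { eapply Rbar_lt_le_trans; [exact Hs'|apply (CV_radius_ge_of_bound _ (INR n * C)); auto].
    intros p. eapply Rle_trans; [apply Rabs_sumn_le|].
    rewrite Rmult_assoc, <- sumn_const. apply sumn_le. intros l Hl. apply Ha; lia. }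
  split.
  - intros i Hi. rewrite <- (is_pseries_unique _ _ _ (is_pseries_vfield_ps n kap cb a s Hr Hrs i Hi)).
    rewrite <- (PSeries_ext (PS_derive (a i))).
    + now apply is_derive_PSeries, Hr.
    + intros m. unfold PS_derive, a. rewrite coef_S. field. apply not_0_INR. lia.
  - intros i Hi. apply (Rabs_PSeries_le _ C M); auto; lra.
Qed.

(** * Continuation past [tB] *)

Definition pack (n : nat) (lam : nat -> R -> R) (rho : R -> R) (i : nat) : R -> R :=
  if (i <? n)%nat then lam i else rho.

Lemma pack_lt n lam rho i : (i < n)%nat -> pack n lam rho i = lam i.
Proof. intros Hi. unfold pack. now rewrite (proj2 (Nat.ltb_lt i n) Hi). Qed.

Lemma pack_n n lam rho : pack n lam rho n = rho.
Proof. unfold pack. now rewrite Nat.ltb_irrefl. Qed.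

Lemma solves_at_pack n k cb rho0 lam0 T lam rho t :
  is_solution n k cb rho0 lam0 T lam rho -> 0 < t < T ->
  solves_at n (k / INR n) cb (pack n lam rho) t.
Proof.
  intros (_ & _ & _ & _ & Hode) Ht i Hi. destruct (Hode t Ht) as [Hlam Hrho].
  destruct (Nat.lt_ge_cases i n) as [Hlt|Hge].
  - rewrite vfield_lt by exact Hlt. cbv beta. rewrite !pack_lt, pack_n by exact Hlt.
    now apply Hlam.
  - replace i with n by lia. rewrite vfield_n. cbv beta. rewrite pack_n.
    replace (sumn n (fun j => pack n lam rho j t)) with (lamsum n lam t); [exact Hrho|].
    apply sumn_ext. intros j Hj. now rewrite pack_lt.
Qed.

Lemma is_solution_of_solves_at n k cb rho0 lam0 tB T lam rho (w : nat -> R -> R) :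
  0 < tB -> is_solution n k cb rho0 lam0 tB lam rho ->
  (forall t, 0 <= t < tB -> forall i, (i <= n)%nat -> w i t = pack n lam rho i t) ->
  (forall t, 0 < t < T -> solves_at n (k / INR n) cb w t) ->
  is_solution n k cb rho0 lam0 T w (w n).
Proof.
  intros HtB (Hl0 & Hr0 & Hlc & Hrc & _) Hw Hode.
  assert (Hnear : forall i, (i <= n)%nat -> at_right 0 (fun s => pack n lam rho i s = w i s)).
  { intros i Hi. apply locally_R. exists tB. split; [exact HtB|].
    intros s Hs Hs0. apply Rabs_def2 in Hs. symmetry. apply Hw; [lra|exact Hi]. }
  assert (Hw0 : forall i, (i <= n)%nat -> w i 0 = pack n lam rho i 0) by (intros i Hi; apply Hw; [lra|exact Hi]).
  split; [|split; [|split; [|split]]].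
  - intros i Hi. rewrite Hw0, pack_lt by lia. now apply Hl0.
  - rewrite Hw0, pack_n by lia. exact Hr0.
  - intros i Hi. rewrite Hw0 by lia.
    apply (filterlim_ext_loc (pack n lam rho i)); [now apply Hnear; lia|].
    rewrite !pack_lt by exact Hi. now apply Hlc.
  - rewrite Hw0 by lia. apply (filterlim_ext_loc (pack n lam rho n)); [now apply Hnear|].
    rewrite pack_n. exact Hrc.
  - intros t Ht. split.
    + intros i Hi. replace (- w i t ^ 2 + k / INR n * (w n t - cb))
        with (vfield n (k / INR n) cb (fun j => w j t) i) by now rewrite vfield_lt.
      apply Hode; [exact Ht|lia].
    + replace (- w n t * lamsum n w t) with (vfield n (k / INR n) cb (fun j => w j t) n)
        by now rewrite vfield_n.
      apply Hode; [exact Ht|lia].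
Qed.

Definition glue (tB : R) (f g : R -> R) (t : R) : R := if Rlt_dec t tB then f t else g t.

Lemma solves_at_glue n kap cb (x y : nat -> R -> R) t0 tB t :
  (forall s, t0 < s < tB -> forall j, (j <= n)%nat -> x j s = y j s) ->
  (t < tB -> solves_at n kap cb x t) -> (t0 < t -> solves_at n kap cb y t) ->
  t0 < t \/ t < tB -> solves_at n kap cb (fun j => glue tB (x j) (y j)) t.
Proof.
  intros Hxy Hx Hy Ht i Hi. unfold glue at 2. destruct (Rlt_dec t tB) as [Hlt|Hge].
  - apply (is_derive_ext_loc (x i)); [|now apply Hx].
    apply locally_R. exists (tB - t). split; [lra|].
    intros s Hs. apply Rabs_def2 in Hs. unfold glue. destruct (Rlt_dec s tB); [reflexivity|lra].
  - assert (Ht0 : t0 < t) by lra.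
    apply (is_derive_ext_loc (y i)); [|now apply Hy].
    apply locally_R. exists (t - t0). split; [lra|].
    intros s Hs. apply Rabs_def2 in Hs. unfold glue.
    destruct (Rlt_dec s tB); [symmetry; apply Hxy; auto; lra|reflexivity].
Qed.

Lemma solves_continue_past n kap cb (z : nat -> R -> R) t1 tB C :
  0 <= kap -> 0 <= cb -> 1 <= C -> t1 < tB ->
  (forall t, t1 <= t < tB ->
     solves_at n kap cb z t /\ forall i, (i <= n)%nat -> Rabs (z i t) <= C) ->
  exists t0 T' (y : nat -> R -> R), t1 <= t0 < tB /\ tB < T' /\
    (forall t, t0 < t < T' -> solves_at n kap cb y t) /\
    (forall t, t0 <= t < tB -> forall i, (i <= n)%nat -> z i t = y i t).
Proof.
  intros Hkap Hcb HC Ht1 Hz.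
  destruct (local_solution n kap cb C Hkap Hcb HC) as [h [Hh Hloc]].
  set (t0 := Rmax t1 (tB - h / 2)).
  assert (Ht0 : t1 <= t0 < tB /\ tB - h / 2 <= t0)
    by (unfold t0; split; [split; [apply Rmax_l|apply Rmax_lub_lt; lra]|apply Rmax_r]).
  destruct (Hloc (fun i => z i t0) (proj2 (Hz t0 ltac:(lra)))) as [y [Hy0 Hy]].
  set (ys := fun i t => y i (t - t0)).
  assert (Hys : forall t, t0 <= t < t0 + h -> solves_at n kap cb ys t /\
                            forall i, (i <= n)%nat -> Rabs (ys i t) <= 2 * C).
  { intros t Ht. destruct (Hy (t - t0)) as [Hs Hb]; [rewrite Rabs_right; lra|].
    split; [|exact Hb]. intros i Hi. apply is_derive_shift, Hs, Hi. }
  exists t0, (t0 + h), ys. split; [lra|]. split; [lra|]. split.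
  - intros t Ht. apply Hys. lra.
  - intros t Ht. apply (solves_unique n kap cb z ys t0 t (2 * C) Hkap); [lra| | |].
    + intros s Hs. split; [apply Hz|apply Hys]; lra.
    + intros s Hs i Hi. split; [|apply Hys; auto; lra].
      assert (Rabs (z i s) <= C) by (apply Hz; auto; lra). lra.
    + intros i Hi. unfold ys. now rewrite Rminus_diag, Hy0.
Qed.

Lemma solution_extends n k cb rho0 lam0 tB lam rho :
  0 <= k / INR n -> 0 <= cb -> 0 < tB -> is_solution n k cb rho0 lam0 tB lam rho ->
  (exists B, at_left tB (fun t =>
     (forall i, (i < n)%nat -> Rabs (lam i t) <= B) /\ Rabs (rho t) <= B)) ->
  exists T' lam' rho', tB < T' /\ is_solution n k cb rho0 lam0 T' lam' rho' /\
    forall t, 0 <= t < tB -> rho' t = rho t /\ forall i, (i < n)%nat -> lam' i t = lam i t.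
Proof.
  intros Hkap Hcb HtB Hsol [B HB].
  set (z := pack n lam rho).
  destruct (at_left_interval_inv tB (tB / 2) _ ltac:(lra) HB) as [t1 [Ht1 Hbd]].
  destruct (solves_continue_past n (k / INR n) cb z t1 tB (Rmax B 1) Hkap Hcb (Rmax_r B 1))
    as (t0 & T' & y & Ht0 & HT' & Hy & Hzy); [lra| |].
  { intros t Ht. split; [apply (solves_at_pack n k cb rho0 lam0 tB); auto; lra|].
    intros i Hi. destruct (Hbd t Ht) as [Hlam Hrho].
    assert (B <= Rmax B 1) by apply Rmax_l. unfold z.
    destruct (Nat.lt_ge_cases i n) as [Hlt|Hge].
    - rewrite pack_lt by exact Hlt. specialize (Hlam i Hlt). lra.
    - replace i with n by lia. rewrite pack_n. lra. }
  set (w := fun i => glue tB (z i) (y i)).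
  assert (Hwz : forall t, t < tB -> forall i, w i t = z i t)
    by (intros t Ht i; unfold w, glue; now destruct (Rlt_dec t tB)).
  exists T', w, (w n). split; [exact HT'|]. split.
  - apply (is_solution_of_solves_at n k cb rho0 lam0 tB _ lam rho w HtB Hsol).
    + intros t Ht i Hi. apply Hwz. lra.
    + intros t Ht. apply (solves_at_glue n _ cb z y t0 tB t).
      * intros s Hs. apply Hzy. lra.
      * intros Htb. apply (solves_at_pack n k cb rho0 lam0 tB); auto; lra.
      * intros Htt0. apply Hy. lra.
      * destruct (Rlt_dec t tB); [right|left]; lra.
  - intros t Ht. rewrite Hwz by lra. unfold z. rewrite pack_n. split; [reflexivity|].
    intros i Hi. rewrite Hwz by lra. unfold z. now rewrite pack_lt.
Qed.

Theorem proposition2p1 (n : nat) (k cb rho0 : R) (lam0 : nat -> R)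
    (tB : R) (lam : nat -> R -> R) (rho : R -> R) :
  (2 <= n)%nat -> 0 < k -> 0 < cb -> 0 < rho0 ->
  (forall i j, (i <= j)%nat -> (j < n)%nat -> lam0 i <= lam0 j) ->
  0 < tB ->
  is_solution n k cb rho0 lam0 tB lam rho ->
  (* [0, tB) is the maximal interval of existence: no solution on a longer
     interval [0, T') extends (lam, rho) *)
  (forall (T' : R) (lam' : nat -> R -> R) (rho' : R -> R),
     tB < T' -> is_solution n k cb rho0 lam0 T' lam' rho' ->
     ~ (forall t, 0 <= t < tB ->
          rho' t = rho t /\ (forall i, (i < n)%nat -> lam' i t = lam i t))) ->
  exists i, (i < n)%nat /\
    filterlim (fun t => Rabs (lam i t)) (at_left tB) (Rbar_locally p_infty).
Proof.
  intros Hn Hk Hcb Hrho0 _ HtB Hsol Hmax.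
  assert (Hkap : 0 <= k / INR n) by (left; apply Rdiv_lt_0_compat; [|apply lt_0_INR; lia]; lra).
  apply NNPP. intros Hno.
  pose proof Hsol as (_ & Hr0 & _ & Hrc & Hode).
  destruct (solution_bounded_near_tB n (k / INR n) cb tB lam rho Hkap ltac:(lra) HtB
              ltac:(now rewrite Hr0) Hrc (fun i t Hi Ht => proj1 (Hode t Ht) i Hi)
              (fun t Ht => proj2 (Hode t Ht)) (fun i Hi Hbl => Hno (ex_intro _ i (conj Hi Hbl))))
    as [B HB].
  destruct (solution_extends n k cb rho0 lam0 tB lam rho Hkap ltac:(lra) HtB Hsol
              (ex_intro _ B HB)) as (T' & lam' & rho' & HT' & Hsol' & Hagree).
  exact (Hmax T' lam' rho' HT' Hsol' Hagree).
Qed.
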